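(* Let $E$ be a finite-dimensional real affine space and let $G(E)$ be the set of generalized affine functions on $E$, equipped with the topology of pointwise convergence. Then $G(E)$ is a compact Hausdorff space.
   Context: A generalized affine function on $E$ is a function $E\to\overline{\mathbb{R}}=\mathbb{R}\cup\{\pm\infty\}$ that is both convex and concave (extended-real-valued sense). The topology of pointwise convergence is the subspace topology from the product topology on $\overline{\mathbb{R}}^{E}$, with $\overline{\mathbb{R}}$ carrying its usual order topology. *)

From HB Require Import structures.
From mathcomp Require Import all_boot all_order all_algebra.
From mathcomp Require Import all_classical all_reals all_analysis.
Set Implicit Arguments. Unset Strict Implicit. Unset Printing Implicit Defensive.
Import Order.TTheory GRing.Theory Num.Theory.
Local Open Scope ring_scope.
Local Open Scope ereal_scope.

(* The finite-dimensional real affine space E is modelled (after choosing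
   an origin and a basis) as 'rV[R]_n, R a real number type. *)

(* Extended-real-valued convexity (Rockafellar): the epigraph
   {(x,t) in E x R | f x <= t} is a convex subset of E x R. *)
Definition econvex (R : realType) (n : nat) (f : 'rV[R]_n -> \bar R) : Prop :=
  forall (x y : 'rV[R]_n) (s t l : R), (0 <= l)%R -> (l <= 1)%R ->
    f x <= s%:E -> f y <= t%:E ->
    f ((1 - l) *: x + l *: y)%R <= ((1 - l) * s + l * t)%:E.

(* Extended-real-valued concavity: the hypograph
   {(x,t) in E x R | t <= f x} is a convex subset of E x R. *)
Definition econcave (R : realType) (n : nat) (f : 'rV[R]_n -> \bar R) : Prop :=
  forall (x y : 'rV[R]_n) (s t l : R), (0 <= l)%R -> (l <= 1)%R ->
    s%:E <= f x -> t%:E <= f y ->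
    ((1 - l) * s + l * t)%:E <= f ((1 - l) *: x + l *: y)%R.

Definition gen_affine (R : realType) (n : nat)
  : set {ptws 'rV[R]_n -> \bar R} :=
  [set f | econvex f /\ econcave f].
Arguments gen_affine R n : clear implicits.

From HB Require Import structures.
From mathcomp Require Import all_boot all_order all_algebra.
From mathcomp Require Import all_classical all_reals all_analysis.
From mathcomp Require Import ring.
Import Order.TTheory GRing.Theory Num.Theory.
Local Open Scope classical_set_scope.
Local Open Scope ring_scope.

(* \bar R is compact, being the image of [-1, 1] under [expand], so the space
   of all functions E -> \bar R is compact by Tychonoff and Hausdorff as a
   product of Hausdorff spaces.  Convexity in the epigraph sense does not
   change when its hypotheses f x <= s, f y <= t are made strict, and in that
   form it is an intersection of unions of sets {f | s <= f x}, which are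
   closed for pointwise convergence; likewise for concavity.  Hence G(E) is a
   closed subset of a compact Hausdorff space. *)

Lemma ereal_compactT (R : realType) : compact [set: \bar R].
Proof.
have -> : [set: \bar R] = @expand R @` `[-1, 1]%classic.
  apply/seteqP; split => // x _; exists (contract x); last exact: contractK.
  by rewrite /= in_itv /=; have := contract_le1 x; rewrite ler_norml.
apply: continuous_compact; last exact: segment_compact.
have le1 (z : R) : z \in `[-1, 1] -> `|z| <= 1.
  by rewrite in_itv /= ler_norml.
apply/subspace_continuousP => r Ar B /=.
rewrite -nbhs_ballE => -[e /= e0 eB].
rewrite nbhs_simpl /=; exists e => //= y ry Ay; apply: eB.
by rewrite /ball /= /ereal_ball !expandK ?inE ?le1.
Qed.

Local Open Scope ereal_scope.

Section pointwise_closed.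
Variables (R : realType) (U : eqType).

Lemma closed_ptws_le (x : U) (a : \bar R) :
  closed [set f : {ptws U -> \bar R} | f x <= a].
Proof.
have := @preimage_closed {ptws U -> \bar R} _ (proj x) [set u | u <= a].
apply; last exact: closed_ereal_ge_ereal.
by move=> f _; exact: proj_continuous.
Qed.

Lemma closed_ptws_ge (x : U) (a : \bar R) :
  closed [set f : {ptws U -> \bar R} | a <= f x].
Proof.
have := @preimage_closed {ptws U -> \bar R} _ (proj x) [set u | a <= u].
apply; last exact: closed_ereal_le_ereal.
by move=> f _; exact: proj_continuous.
Qed.

End pointwise_closed.

Section strict_hypotheses.
Variables (R : realType) (n : nat) (f : 'rV[R]_n -> \bar R).

Lemma econvex_lt : econvex f <->
  forall (x y : 'rV[R]_n) (s t l : R), (0 <= l)%R -> (l <= 1)%R ->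
    f x < s%:E -> f y < t%:E ->
    f ((1 - l) *: x + l *: y)%R <= ((1 - l) * s + l * t)%:E.
Proof.
split=> [cvx x y s t l l0 l1 /ltW fx /ltW fy | cvx x y s t l l0 l1 fx fy].
  exact: cvx.
apply/lee_addgt0Pr => e e0.
have -> : ((1 - l) * s + l * t)%:E + e%:E = ((1 - l) * (s + e) + l * (t + e))%:E.
  by rewrite -EFinD; congr EFin; ring.
by apply: cvx => //; [apply: le_lt_trans fx _ | apply: le_lt_trans fy _];
  rewrite lte_fin ltrDl.
Qed.

Lemma econcave_gt : econcave f <->
  forall (x y : 'rV[R]_n) (s t l : R), (0 <= l)%R -> (l <= 1)%R ->
    s%:E < f x -> t%:E < f y ->
    ((1 - l) * s + l * t)%:E <= f ((1 - l) *: x + l *: y)%R.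
Proof.
split=> [ccv x y s t l l0 l1 /ltW fx /ltW fy | ccv x y s t l l0 l1 fx fy].
  exact: ccv.
apply/lee_subgt0Pr => e e0.
have -> : ((1 - l) * s + l * t)%:E - e%:E = ((1 - l) * (s - e) + l * (t - e))%:E.
  by rewrite -EFinB; congr EFin; ring.
by apply: ccv => //; [apply: lt_le_trans _ fx | apply: lt_le_trans _ fy];
  rewrite lte_fin ltrBlDr ltrDl.
Qed.

End strict_hypotheses.

Section closed_gen_affine.
Variables (R : realType) (n : nat).

Let param := ('rV[R]_n * 'rV[R]_n * R * R * R)%type.
Let unit_weight : set param := [set p | (0 <= p.2 <= 1)%R].

Lemma closed_econvex : closed [set f : {ptws 'rV[R]_n -> \bar R} | econvex f].
Proof.
pose C (p : param) : set {ptws 'rV[R]_n -> \bar R} :=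
  let: (x, y, s, t, l) := p in
  [set f | s%:E <= f x] `|` [set f | t%:E <= f y] `|`
  [set f | f ((1 - l) *: x + l *: y)%R <= ((1 - l) * s + l * t)%:E].
have -> : [set f | econvex f] = \bigcap_(p in unit_weight) C p.
  apply/seteqP; split => f /=.
  - move=> /econvex_lt cvx [[[[x y] s] t] l] /andP[l0 l1] /=.
    have [|fx] := leP s%:E (f x); first by left; left.
    have [|fy] := leP t%:E (f y); first by left; right.
    by right; exact: cvx.
  - move=> Cf; apply/econvex_lt => x y s t l l0 l1 fx fy.
    have [[|]|//] := Cf (x, y, s, t, l) (introT andP (conj l0 l1)).
    + by move=> /=; rewrite leNgt fx.
    + by move=> /=; rewrite leNgt fy.
apply: closed_bigI => -[[[[x y] s] t] l] _.
by apply: closedU; [apply: closedU|]; [apply: closed_ptws_ge..|apply: closed_ptws_le].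
Qed.

Lemma closed_econcave : closed [set f : {ptws 'rV[R]_n -> \bar R} | econcave f].
Proof.
pose C (p : param) : set {ptws 'rV[R]_n -> \bar R} :=
  let: (x, y, s, t, l) := p in
  [set f | f x <= s%:E] `|` [set f | f y <= t%:E] `|`
  [set f | ((1 - l) * s + l * t)%:E <= f ((1 - l) *: x + l *: y)%R].
have -> : [set f | econcave f] = \bigcap_(p in unit_weight) C p.
  apply/seteqP; split => f /=.
  - move=> /econcave_gt ccv [[[[x y] s] t] l] /andP[l0 l1] /=.
    have [|fx] := leP (f x) s%:E; first by left; left.
    have [|fy] := leP (f y) t%:E; first by left; right.
    by right; exact: ccv.
  - move=> Cf; apply/econcave_gt => x y s t l l0 l1 fx fy.
    have [[|]|//] := Cf (x, y, s, t, l) (introT andP (conj l0 l1)).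
    + by move=> /=; rewrite leNgt fx.
    + by move=> /=; rewrite leNgt fy.
apply: closed_bigI => -[[[[x y] s] t] l] _.
by apply: closedU; [apply: closedU|]; [apply: closed_ptws_le..|apply: closed_ptws_ge].
Qed.

End closed_gen_affine.

Theorem theorem2 (R : realType) (n : nat) :
  compact (gen_affine R n) /\ hausdorff_space (subspace (gen_affine R n)).
Proof.
split; last first.
  by apply: subspace_hausdorff; apply: hausdorff_product => _; exact: ereal_hausdorff.
apply: (@subclosed_compact _ _ [set: {ptws 'rV[R]_n -> \bar R}]) => //.
- exact: closedI (closed_econvex R n) (closed_econcave R n).
- have := tychonoff (fun _ : 'rV[R]_n => ereal_compactT R).
  by congr compact; apply/seteqP; split.
Qed.
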